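(* Let $(X,T)$ be a weakly mixing topological dynamical system. Then either $BP(X,T)=X^2$ (and in this case $\operatorname{supp}(X,T)$ is a singleton), or $BP(X,T)$ is a first category subset of $X\times X$ disjoint from the set of transitive points of $(X^2,T\times T)$.
   Context: A topological dynamical system $(X,T)$ consists of a non-empty compact metric space $(X,d)$ and a continuous map $T:X\to X$. It is weakly mixing if $(X\times X,T\times T)$ is transitive (for all non-empty open $U,V$, $\{n\ge0:U\cap (T\times T)^{-n}V\ne\emptyset\}$ is infinite). A transitive point is a point with dense forward orbit. A set $F\subset\mathbb{Z}_+$ has Banach density one if for every $\lambda<1$ there is $N\ge1$ with $\#(F\cap I)\ge\lambda\,\#(I)$ for every interval of integers $I\subset\mathbb{Z}_+$ with $\#(I)\ge N$. A pair $(x,y)$ is Banach proximal if for every $\varepsilon>0$ the set $\{n\in\mathbb{Z}_+: d(T^nx,T^ny)<\varepsilon\}$ has Banach density one; $BP(X,T)$ is the set of Banach proximal pairs. $\operatorname{supp}(X,T)$ is the smallest closed set $C\subset X$ with $\mu(C)=1$ for all $T$-invariant Borel probability measures $\mu$. *)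

From Stdlib Require Import Reals Lra Lia Classical ClassicalEpsilon.
Open Scope R_scope.

Section Topo.
Variable X : Type.
Variable d : X -> X -> R.

Definition is_metric : Prop :=
  (forall x y, 0 <= d x y) /\
  (forall x y, d x y = 0 <-> x = y) /\
  (forall x y, d x y = d y x) /\
  (forall x y z, d x z <= d x y + d y z).

Definition is_open (U : X -> Prop) : Prop :=
  forall x, U x -> exists r, r > 0 /\ forall y, d x y < r -> U y.

Definition is_closed (C : X -> Prop) : Prop := is_open (fun x => ~ C x).

Definition compact_space : Prop :=
  forall (I : Type) (U : I -> X -> Prop),
    (forall i, is_open (U i)) -> (forall x, exists i, U i x) ->
    exists l : list I, forall x, exists i, List.In i l /\ U i x.

Definition closure (A : X -> Prop) : X -> Prop :=
  fun x => forall eps, eps > 0 -> exists a, A a /\ d x a < eps.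

Definition interior (A : X -> Prop) : X -> Prop :=
  fun x => exists r, r > 0 /\ forall y, d x y < r -> A y.

Definition nowhere_dense (A : X -> Prop) : Prop :=
  forall x, ~ interior (closure A) x.

Definition first_category (A : X -> Prop) : Prop :=
  exists B : nat -> X -> Prop,
    (forall n, nowhere_dense (B n)) /\ (forall x, A x -> exists n, B n x).

Inductive borel : (X -> Prop) -> Prop :=
| borel_open U : is_open U -> borel U
| borel_compl A : borel A -> borel (fun x => ~ A x)
| borel_union (A : nat -> X -> Prop) :
    (forall n, borel (A n)) -> borel (fun x => exists n, A n x).

Definition borel_prob_measure (mu : (X -> Prop) -> R) : Prop :=
  (forall A B, (forall x, A x <-> B x) -> mu A = mu B) /\
  (forall A, borel A -> 0 <= mu A) /\
  mu (fun _ => True) = 1 /\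
  (forall A : nat -> X -> Prop,
     (forall n, borel (A n)) ->
     (forall n m x, n <> m -> A n x -> A m x -> False) ->
     infinite_sum (fun n => mu (A n)) (mu (fun x => exists n, A n x))).

Variable T : X -> X.

Definition invariant_measure (mu : (X -> Prop) -> R) : Prop :=
  borel_prob_measure mu /\ forall A, borel A -> mu (fun x => A (T x)) = mu A.

(* supp(X,T) = {x0}: {x0} is the smallest closed set of full measure for
   every T-invariant Borel probability measure *)
Definition supp_is_singleton_at (x0 : X) : Prop :=
  (is_closed (fun x => x = x0) /\
   forall mu, invariant_measure mu -> mu (fun x => x = x0) = 1) /\
  (forall C, is_closed C -> (forall mu, invariant_measure mu -> mu C = 1) -> C x0).

Definition supp_singleton : Prop := exists x0, supp_is_singleton_at x0.

Definition continuous_map : Prop :=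
  forall x eps, eps > 0 -> exists delta, delta > 0 /\
    forall y, d x y < delta -> d (T x) (T y) < eps.

Definition TDS : Prop :=
  inhabited X /\ is_metric /\ compact_space /\ continuous_map.

End Topo.

Arguments is_open {X}. Arguments is_closed {X}. Arguments compact_space {X}.
Arguments closure {X}. Arguments interior {X}. Arguments nowhere_dense {X}.
Arguments first_category {X}. Arguments borel {X}.
Arguments borel_prob_measure {X}. Arguments invariant_measure {X}.
Arguments supp_is_singleton_at {X}. Arguments supp_singleton {X}.
Arguments continuous_map {X}. Arguments TDS {X}. Arguments is_metric {X}.

(* product (max) metric on X * X, inducing the product topology *)
Definition dprod {X : Type} (d : X -> X -> R) (p q : X * X) : R :=
  Rmax (d (fst p) (fst q)) (d (snd p) (snd q)).

Definition TT {X : Type} (T : X -> X) (p : X * X) : X * X := (T (fst p), T (snd p)).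

(* weakly mixing: (X x X, T x T) transitive *)
Definition weakly_mixing {X : Type} (d : X -> X -> R) (T : X -> X) : Prop :=
  forall U V : X * X -> Prop,
    is_open (dprod d) U -> is_open (dprod d) V ->
    (exists p, U p) -> (exists p, V p) ->
    forall N : nat, exists n : nat, (n >= N)%nat /\
      exists p, U p /\ V (Nat.iter n (TT T) p).

Definition transitive_point {Y : Type} (e : Y -> Y -> R) (S : Y -> Y) (y : Y) : Prop :=
  forall w eps, eps > 0 -> exists n : nat, e (Nat.iter n S y) w < eps.

Definition indic (F : nat -> Prop) (n : nat) : nat :=
  if excluded_middle_informative (F n) then 1%nat else 0%nat.

Fixpoint count_in (F : nat -> Prop) (a L : nat) : nat :=
  match L with
  | O => O
  | S L' => (count_in F a L' + indic F (a + L'))%nat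
  end.

(* Banach density one; intervals of integers in Z+ are {a,...,a+L-1} *)
Definition banach_density_one (F : nat -> Prop) : Prop :=
  forall lambda : R, lambda < 1 ->
    exists N : nat, (N >= 1)%nat /\
      forall a L : nat, (L >= N)%nat -> INR (count_in F a L) >= lambda * INR L.

Definition banach_proximal {X : Type} (d : X -> X -> R) (T : X -> X) (x y : X) : Prop :=
  forall eps, eps > 0 ->
    banach_density_one (fun n => d (Nat.iter n T x) (Nat.iter n T y) < eps).

(* Case 1: some Banach proximal pair (x,y) has a dense (T x T)-orbit.  Any
   window of times for an arbitrary pair (u,v) is then shadowed, uniformly
   along the window, by a window of (x,y); hence every pair is Banach
   proximal.  In particular x and T x are, which yields approximate fixed
   points and, by compactness, a fixed point x0.  Every orbit is Banach
   proximal to x0, so by compactness there is a uniform bound M such that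
   every point reaches, within M steps, a stopping time before which it spent
   a fraction <= 1-lambda of the time outside the ball B(x0,eps).  Integrating
   the visits to X \ B(x0,eps) against an invariant measure mu gives
   mu(X \ B(x0,eps)) <= 1-lambda, hence mu {x0} = 1; the Dirac mass at x0 is
   invariant, so supp(X,T) = {x0}.

   Case 2: Banach proximal pairs are never transitive points of X x X.  A
   non-transitive point avoids forever a ball around a point of some finite
   net, and the set of points avoiding a fixed ball is nowhere dense because
   weak mixing brings every open set into that ball.  So the non-transitive
   points, and with them the Banach proximal pairs, form a first category set. *)

From Stdlib Require Import Reals Lra Lia Classical ClassicalEpsilon
  FunctionalExtensionality PropExtensionality List Arith Cantor.
Open Scope R_scope.

Lemma iter_add {A} (f : A -> A) m n x :
  Nat.iter (m + n) f x = Nat.iter n f (Nat.iter m f x).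
Proof. rewrite Nat.add_comm; apply Nat.iter_add. Qed.

Lemma iter_TT {X} (T : X -> X) n p :
  Nat.iter n (TT T) p = (Nat.iter n T (fst p), Nat.iter n T (snd p)).
Proof.
  induction n as [|n IH]; simpl; [destruct p; reflexivity | rewrite IH; reflexivity].
Qed.

Lemma iter_fixed {A} (f : A -> A) x n : f x = x -> Nat.iter n f x = x.
Proof. intros H; induction n as [|n IH]; simpl; [reflexivity | rewrite IH; exact H]. Qed.

Lemma count_le F a L : (count_in F a L <= L)%nat.
Proof.
  induction L as [|L IH]; simpl; [lia|].
  unfold indic; destruct excluded_middle_informative; lia.
Qed.

Lemma count_mono F G a b L :
  (forall j, (j < L)%nat -> F (a + j)%nat -> G (b + j)%nat) ->
  (count_in F a L <= count_in G b L)%nat.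
Proof.
  induction L as [|L IH]; intros H; simpl; [lia|].
  assert (IHL := IH (fun j hj => H j ltac:(lia))).
  unfold indic; destruct (excluded_middle_informative (F (a + L)%nat)) as [f|f];
    destruct (excluded_middle_informative (G (b + L)%nat)) as [g|g]; try lia.
  exfalso; apply g, H; [lia | exact f].
Qed.

Lemma count_ext F G a b L :
  (forall j, (j < L)%nat -> (F (a + j)%nat <-> G (b + j)%nat)) ->
  count_in F a L = count_in G b L.
Proof. intros H; apply Nat.le_antisymm; apply count_mono; intros j hj; apply H; auto. Qed.

Lemma count_split F a L1 L2 :
  count_in F a (L1 + L2) = (count_in F a L1 + count_in F (a + L1) L2)%nat.
Proof.
  induction L2 as [|L2 IH]; [rewrite Nat.add_0_r; simpl; lia|].
  rewrite Nat.add_succ_r; simpl; rewrite IH.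
  replace (a + (L1 + L2))%nat with (a + L1 + L2)%nat by lia; lia.
Qed.

Lemma count_compl F a L : (count_in F a L + count_in (fun n => ~ F n) a L)%nat = L.
Proof.
  induction L as [|L IH]; simpl; [lia|]. unfold indic.
  destruct (excluded_middle_informative (F (a + L)%nat));
    destruct (excluded_middle_informative (~ F (a + L)%nat)); try tauto; lia.
Qed.

Lemma count_pos F a L :
  (0 < count_in F a L)%nat -> exists j, (j < L)%nat /\ F (a + j)%nat.
Proof.
  induction L as [|L IH]; simpl; intros H; [lia|].
  unfold indic in H; destruct (excluded_middle_informative (F (a + L)%nat)) as [f|f].
  - exists L; split; [lia | exact f].
  - rewrite Nat.add_0_r in H; destruct (IH H) as [j [hj fj]]; exists j; split; [lia | exact fj].
Qed.

Lemma inv_succ_pos m : / (INR m + 1) > 0.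
Proof. pose proof (pos_INR m); apply Rinv_0_lt_compat; lra. Qed.

Lemma inv_succ_small eps : eps > 0 -> exists m : nat, / (INR m + 1) < eps.
Proof.
  intros he. destruct (INR_unbounded (/ eps)) as [m hm]. exists m.
  pose proof (pos_INR m).
  replace eps with (/ / eps) by (field; lra).
  apply Rinv_lt_contravar; [|lra].
  apply Rmult_lt_0_compat; [apply Rinv_0_lt_compat; lra | lra].
Qed.

Lemma inv_succ_antitone (k K : nat) : (k <= K)%nat -> / (INR K + 1) <= / (INR k + 1).
Proof.
  intros h; apply le_INR in h; pose proof (pos_INR k).
  apply Rinv_le_contravar; lra.
Qed.

Lemma nonneg_below_inv_succ a : 0 <= a -> (forall k, a <= / (INR k + 1)) -> a = 0.
Proof.
  intros h0 H. destruct (Rle_lt_or_eq_dec 0 a h0) as [hlt|]; [|auto].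
  destruct (inv_succ_small a hlt) as [k hk]. specialize (H k); lra.
Qed.

Lemma le_of_linear_bound a b M : (forall K, INR K * a <= INR K * b + M) -> a <= b.
Proof.
  intros H. apply Rnot_lt_le; intros C.
  destruct (INR_unbounded (M / (a - b))) as [K hK].
  specialize (H K).
  assert (hM : INR K * (a - b) > M).
  { apply (Rmult_lt_compat_r (a - b)) in hK; [|lra].
    unfold Rdiv in hK; rewrite Rmult_assoc, Rinv_l, Rmult_1_r in hK by lra; lra. }
  lra.
Qed.

Lemma list_max_bound (l : list nat) : exists K, forall i, In i l -> (i <= K)%nat.
Proof.
  induction l as [|a l [K HK]]; [exists 0%nat; intros i [] |].
  exists (Nat.max a K); intros i [->|h]; [lia | specialize (HK i h); lia].
Qed.

Definition pseudometric {Y} (e : Y -> Y -> R) : Prop :=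
  (forall p q, 0 <= e p q) /\ (forall p q, e p q = e q p) /\
  (forall p q r, e p r <= e p q + e q r) /\ (forall p, e p p = 0).

Lemma metric_pseudometric {X} (d : X -> X -> R) : is_metric d -> pseudometric d.
Proof.
  intros [h0 [hsep [hsym htri]]]; repeat split; auto.
  intros p; apply hsep; reflexivity.
Qed.

Lemma dprod_pseudometric {X} (d : X -> X -> R) : is_metric d -> pseudometric (dprod d).
Proof.
  intros hm; destruct (metric_pseudometric d hm) as [h0 [hs [ht hr]]].
  unfold dprod; repeat split.
  - intros p q; pose proof (h0 (fst p) (fst q)); pose proof (Rmax_l (d (fst p) (fst q)) (d (snd p) (snd q))); lra.
  - intros p q; rewrite (hs (fst p)), (hs (snd p)); reflexivity.
  - intros p q r.
    pose proof (ht (fst p) (fst q) (fst r)); pose proof (ht (snd p) (snd q) (snd r)).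
    pose proof (Rmax_l (d (fst p) (fst q)) (d (snd p) (snd q))).
    pose proof (Rmax_r (d (fst p) (fst q)) (d (snd p) (snd q))).
    pose proof (Rmax_l (d (fst q) (fst r)) (d (snd q) (snd r))).
    pose proof (Rmax_r (d (fst q) (fst r)) (d (snd q) (snd r))).
    apply Rmax_lub; lra.
  - intros p; rewrite !hr; apply Rmax_left; lra.
Qed.

Lemma ball_open {Y} (e : Y -> Y -> R) c r : pseudometric e -> is_open e (fun y => e c y < r).
Proof.
  intros [h0 [hs [ht hr]]] x hx. exists (r - e c x); split; [lra|].
  intros y hy; pose proof (ht c x y); lra.
Qed.

Lemma ball_open_sym {Y} (e : Y -> Y -> R) c r : pseudometric e -> is_open e (fun y => e y c < r).
Proof.
  intros he; pose proof he as [_ [hs _]].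
  replace (fun y => e y c < r) with (fun y => e c y < r); [apply ball_open; auto|].
  apply functional_extensionality; intros y; rewrite hs; reflexivity.
Qed.

Lemma not_transitive_avoids {Y} (e : Y -> Y -> R) (S : Y -> Y) p :
  ~ transitive_point e S p ->
  exists w eps, eps > 0 /\ forall n, e (Nat.iter n S p) w >= eps.
Proof.
  intros hnt; apply NNPP; intros C; apply hnt; intros w eps he.
  apply NNPP; intros C2; apply C; exists w, eps; split; auto.
  intros n; apply Rnot_lt_ge; intros h; apply C2; eauto.
Qed.

Section Continuity.
Variables (X : Type) (d : X -> X -> R) (T : X -> X).
Hypothesis hc : continuous_map d T.

Lemma continuous_iter n x eps : eps > 0 -> exists delta, delta > 0 /\
  forall y, d x y < delta -> d (Nat.iter n T x) (Nat.iter n T y) < eps.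
Proof.
  revert x eps; induction n as [|n IH]; intros x eps he; [exists eps; split; auto|].
  destruct (hc (Nat.iter n T x) eps he) as [d1 [hd1 H1]].
  destruct (IH x d1 hd1) as [d2 [hd2 H2]].
  exists d2; split; auto. intros y hy; simpl; apply H1, H2, hy.
Qed.

Lemma continuous_iter_window L x eps : eps > 0 -> exists delta, delta > 0 /\
  forall y, d x y < delta -> forall j, (j < L)%nat -> d (Nat.iter j T x) (Nat.iter j T y) < eps.
Proof.
  intros he; induction L as [|L IH]; [exists 1; split; [lra | intros; lia]|].
  destruct IH as [d1 [hd1 H1]].
  destruct (continuous_iter L x eps he) as [d2 [hd2 H2]].
  exists (Rmin d1 d2); split; [apply Rmin_pos; auto|].
  intros y hy j hj. pose proof (Rmin_l d1 d2); pose proof (Rmin_r d1 d2).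
  destruct (Nat.eq_dec j L) as [->|ne]; [apply H2; lra | apply H1; [lra | lia]].
Qed.

Lemma continuous_TT_window L p eps : eps > 0 -> exists delta, delta > 0 /\
  forall q, dprod d p q < delta -> forall j, (j < L)%nat ->
    dprod d (Nat.iter j (TT T) p) (Nat.iter j (TT T) q) < eps.
Proof.
  intros he.
  destruct (continuous_iter_window L (fst p) eps he) as [d1 [hd1 H1]].
  destruct (continuous_iter_window L (snd p) eps he) as [d2 [hd2 H2]].
  exists (Rmin d1 d2); split; [apply Rmin_pos; auto|].
  intros q hq j hj. pose proof (Rmin_l d1 d2); pose proof (Rmin_r d1 d2).
  unfold dprod in hq. pose proof (Rmax_l (d (fst p) (fst q)) (d (snd p) (snd q))).
  pose proof (Rmax_r (d (fst p) (fst q)) (d (snd p) (snd q))).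
  rewrite !iter_TT; unfold dprod; simpl. apply Rmax_lub_lt; [apply H1 | apply H2]; auto; lra.
Qed.

End Continuity.

Lemma compact_increasing_cover {X} (d : X -> X -> R) (U : nat -> X -> Prop) :
  compact_space d -> (forall N, is_open d (U N)) ->
  (forall N M x, (N <= M)%nat -> U N x -> U M x) -> (forall x, exists N, U N x) ->
  exists N, forall x, U N x.
Proof.
  intros hk hU hmono hcov. destruct (hk nat U hU hcov) as [l Hl].
  destruct (list_max_bound l) as [K HK]. exists K; intros x.
  destruct (Hl x) as [N [hN hx]]. exact (hmono N K x (HK N hN) hx).
Qed.

Lemma finite_nets {X} (d : X -> X -> R) : is_metric d -> compact_space d ->
  exists net : nat -> list X, forall m y, exists x, In x (net m) /\ d x y < / (INR m + 1).
Proof.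
  intros hm hk. pose proof (metric_pseudometric d hm) as hp; pose proof hp as [_ [_ [_ hr]]].
  assert (Hn : forall m, exists l : list X, forall y, exists x, In x l /\ d x y < / (INR m + 1)).
  { intros m. pose proof (inv_succ_pos m).
    destruct (hk X (fun x y => d x y < / (INR m + 1)) (fun x => ball_open _ _ _ hp))
      as [l Hl]; [intros y; exists y; rewrite hr; lra|].
    exists l; intros y; destruct (Hl y) as [x [h1 h2]]; eauto. }
  exists (fun m => proj1_sig (constructive_indefinite_description _ (Hn m))).
  intros m; exact (proj2_sig (constructive_indefinite_description _ (Hn m))).
Qed.

(** Non-transitive pairs form a first category set *)

Definition avoids_ball {Y} (e : Y -> Y -> R) (S : Y -> Y) (c : Y) (r : R) (p : Y) : Prop :=
  forall n, e (Nat.iter n S p) c >= r.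

Section Category.
Variables (X : Type) (d : X -> X -> R) (T : X -> X).
Hypotheses (hm : is_metric d) (hc : continuous_map d T).

(* Weak mixing sends every ball into B(c,r), and by continuity a whole
   neighbourhood of the sending point does the same: no ball lies in the
   closure of the avoiding set. *)
Lemma avoids_ball_nowhere_dense c r : weakly_mixing d T -> r > 0 ->
  nowhere_dense (dprod d) (avoids_ball (dprod d) (TT T) c r).
Proof.
  intros hw hr q [rho [hrho Hin]].
  pose proof (dprod_pseudometric d hm) as hp; pose proof hp as [_ [ps [pt pr]]].
  assert (ne1 : exists p, dprod d q p < rho) by (exists q; rewrite pr; lra).
  assert (ne2 : exists p, dprod d p c < r) by (exists c; rewrite pr; lra).
  destruct (hw _ _ (ball_open _ q rho hp) (ball_open_sym _ c r hp) ne1 ne2 0%nat)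
    as [n [_ [p [Up Vp]]]].
  destruct (continuous_TT_window X d T hc (S n) p (r - dprod d (Nat.iter n (TT T) p) c)
              ltac:(lra)) as [dl [hdl Hc]].
  destruct (Hin p Up dl hdl) as [a [Ea ha]].
  specialize (Hc a ha n ltac:(lia)). specialize (Ea n).
  pose proof (pt (Nat.iter n (TT T) a) (Nat.iter n (TT T) p) c).
  rewrite ps in Hc. lra.
Qed.

(* Every non-transitive pair avoids a ball of radius 1/(m+1) centred at a
   pair of points of the m-th finite net; these countably many avoiding sets
   are nowhere dense. *)
Lemma nontransitive_first_category : inhabited X -> compact_space d -> weakly_mixing d T ->
  first_category (dprod d) (fun p => ~ transitive_point (dprod d) (TT T) p).
Proof.
  intros [x0] hk hw. destruct (finite_nets d hm hk) as [net Hnet].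
  exists (fun k => let '(m, ij) := of_nat k in let '(i, j) := of_nat ij in
            avoids_ball (dprod d) (TT T) (nth i (net m) x0, nth j (net m) x0) (/ (INR m + 1))).
  split.
  - intros k. destruct (of_nat k) as [m ij]; destruct (of_nat ij) as [i j].
    apply avoids_ball_nowhere_dense; [exact hw | apply inv_succ_pos].
  - intros p hnt.
    destruct (not_transitive_avoids _ _ _ hnt) as [w [eps [he Hw]]].
    destruct (inv_succ_small (eps / 2) ltac:(lra)) as [m hm'].
    destruct (Hnet m (fst w)) as [x1 [i1 h1]]; destruct (Hnet m (snd w)) as [x2 [i2 h2]].
    destruct (In_nth _ _ x0 i1) as [i [_ ei]]; destruct (In_nth _ _ x0 i2) as [j [_ ej]].
    exists (to_nat (m, to_nat (i, j))). rewrite !cancel_of_to, ei, ej.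
    intros n. pose proof (dprod_pseudometric d hm) as [_ [_ [pt _]]].
    pose proof (pt (Nat.iter n (TT T) p) (x1, x2) w). specialize (Hw n).
    assert (dprod d (x1, x2) w < / (INR m + 1)) by (unfold dprod; simpl; apply Rmax_lub_lt; auto).
    pose proof (inv_succ_pos m). lra.
Qed.

End Category.

(** One transitive Banach proximal pair makes every pair Banach proximal *)

Section Transfer.
Variables (X : Type) (d : X -> X -> R) (T : X -> X).
Hypotheses (hm : is_metric d) (hc : continuous_map d T).

(* Given a window [a, a+L) for (u,v), the dense orbit of (x,y) enters the
   neighbourhood of T^a(u,v) that stays eps/3-close along L steps; on that
   window every eps/3-proximal time of (x,y) is an eps-proximal time of (u,v). *)
Lemma banach_proximal_transfer x y :
  banach_proximal d T x y -> transitive_point (dprod d) (TT T) (x, y) ->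
  forall u v, banach_proximal d T u v.
Proof.
  intros hbp htr u v eps he lam hl.
  destruct (hbp (eps / 3) ltac:(lra) lam hl) as [N [hN H]].
  exists N; split; auto. intros a L hL.
  set (w := (Nat.iter a T u, Nat.iter a T v)).
  destruct (continuous_TT_window X d T hc L w (eps / 3) ltac:(lra)) as [dl [hdl Hc]].
  destruct (htr w dl hdl) as [m hmw].
  pose proof (dprod_pseudometric d hm) as [_ [ps _]].
  pose proof (metric_pseudometric d hm) as [_ [qs [qt _]]].
  rewrite ps in hmw. specialize (Hc _ hmw).
  eapply Rge_trans; [|apply (H m L hL)].
  apply Rle_ge, le_INR, count_mono. intros j hj Fj. specialize (Hc j hj).
  rewrite !iter_TT in Hc. unfold w in Hc; simpl in Hc. rewrite <- !iter_add in Hc.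
  unfold dprod in Hc; simpl in Hc.
  set (u' := Nat.iter (a + j) T u) in *; set (v' := Nat.iter (a + j) T v) in *.
  set (x' := Nat.iter (m + j) T x) in *; set (y' := Nat.iter (m + j) T y) in *.
  pose proof (Rmax_l (d u' x') (d v' y')); pose proof (Rmax_r (d u' x') (d v' y')).
  pose proof (qt u' x' v'); pose proof (qt x' y' v'). rewrite (qs y' v') in *.
  lra.
Qed.

End Transfer.

(** A system in which all pairs are Banach proximal has a fixed point *)

Section FixedPoint.
Variables (X : Type) (d : X -> X -> R) (T : X -> X).
Hypotheses (hm : is_metric d) (hc : continuous_map d T).

Lemma approximate_fixed_points x eps :
  banach_proximal d T x (T x) -> eps > 0 -> exists z, d z (T z) < eps.
Proof.
  intros hbp he. destruct (hbp eps he (1 / 2) ltac:(lra)) as [N [hN H]].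
  specialize (H 0%nat N (le_n _)).
  assert (hpos : (0 < count_in (fun n => (d (Nat.iter n T x) (Nat.iter n T (T x)) < eps)%R) 0 N)%nat).
  { apply INR_lt; simpl. apply le_INR in hN; simpl in hN; lra. }
  destruct (count_pos _ _ _ hpos) as [j [_ hj]]. exists (Nat.iter j T x).
  simpl in hj; rewrite Nat.iter_swap in hj; exact hj.
Qed.

Lemma displacement_open c : is_open d (fun z => c < d z (T z)).
Proof.
  pose proof (metric_pseudometric d hm) as [_ [qs [qt _]]].
  intros z hz. set (g := d z (T z) - c).
  destruct (hc z (g / 2) ltac:(unfold g; lra)) as [dl [hdl Hd]].
  exists (Rmin dl (g / 2)); split; [apply Rmin_pos; unfold g; lra|].
  intros w hw. pose proof (Rmin_l dl (g / 2)); pose proof (Rmin_r dl (g / 2)).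
  specialize (Hd w ltac:(lra)).
  pose proof (qt z w (T z)); pose proof (qt w (T w) (T z)). rewrite (qs (T w) (T z)) in *.
  unfold g in *; lra.
Qed.

(* Without a fixed point the sets {z | d z (T z) > 1/(k+1)} would form an
   increasing open cover, so the displacement would be bounded below. *)
Lemma fixed_point_of_all_proximal :
  inhabited X -> compact_space d -> (forall x y, banach_proximal d T x y) -> exists z, T z = z.
Proof.
  intros [x0] hk hbp. apply NNPP; intros nofix.
  pose proof (metric_pseudometric d hm) as [q0 _].
  destruct (compact_increasing_cover d (fun k z => / (INR k + 1) < d z (T z)) hk)
    as [K HK].
  - intros k; apply displacement_open.
  - intros k K z hkK hz; pose proof (inv_succ_antitone k K hkK); lra.
  - intros z. destruct (Rle_lt_or_eq_dec 0 (d z (T z)) (q0 _ _)) as [hlt|heq].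
    + destruct (inv_succ_small _ hlt) as [k hk']; exists k; exact hk'.
    + exfalso; apply nofix; exists z; apply eq_sym, hm; auto.
  - destruct (approximate_fixed_points x0 (/ (INR K + 1)) (hbp x0 (T x0)) (inv_succ_pos K))
      as [z hz].
    specialize (HK z); lra.
Qed.

End FixedPoint.

Lemma infinite_sum_eventually s l N0 :
  (forall n, (n >= N0)%nat -> sum_f_R0 s n = l) -> infinite_sum s l.
Proof.
  intros H eps he. exists N0; intros n hn.
  rewrite H; auto. unfold R_dist; rewrite Rminus_diag, Rabs_R0; lra.
Qed.

Lemma infinite_sum_single s k : (forall n, n <> k -> s n = 0) -> infinite_sum s (s k).
Proof.
  intros H. apply (infinite_sum_eventually _ _ k). intros n hn.
  induction n as [|n IH] in hn |- *.
  - replace k with 0%nat by lia; reflexivity.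
  - rewrite tech5. destruct (Nat.eq_dec k (S n)) as [->|ne].
    + rewrite sum_eq_R0; [lra | intros i hi; apply H; lia].
    + rewrite IH, (H (S n)) by lia; lra.
Qed.

Section Borel.
Variables (X : Type) (d : X -> X -> R).

Lemma borel_ext (A B : X -> Prop) : (forall x, A x <-> B x) -> borel d A -> borel d B.
Proof.
  intros H hA. replace B with A; [exact hA|].
  apply functional_extensionality; intros x; apply propositional_extensionality, H.
Qed.

Lemma borel_True : borel d (fun _ => True).
Proof. apply borel_open; intros x _; exists 1; split; [lra | auto]. Qed.

Lemma borel_False : borel d (fun _ => False).
Proof. eapply borel_ext; [|apply borel_compl, borel_True]; intros x; tauto. Qed.

Lemma borel_inter P Q : borel d P -> borel d Q -> borel d (fun x => P x /\ Q x).
Proof.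
  intros hP hQ.
  set (C := fun n : nat => match n with 0%nat => fun x => ~ P x | _ => fun x => ~ Q x end).
  apply (borel_ext (fun x => ~ exists n, C n x)).
  - intros x; split.
    + intros H; split; apply NNPP; intros h; apply H; [exists 0%nat | exists 1%nat]; exact h.
    + intros [p q] [n hn]; destruct n; simpl in hn; tauto.
  - apply borel_compl, borel_union; intros [|n]; apply borel_compl; auto.
Qed.

Lemma borel_preimage (T : X -> X) :
  continuous_map d T -> forall A, borel d A -> borel d (fun x => A (T x)).
Proof.
  intros hc A HB; induction HB as [U hU|A hA IH|A hA IH].
  - apply borel_open; intros x hx. destruct (hU (T x) hx) as [r [hr Hr]].
    destruct (hc x r hr) as [dl [hdl Hd]]. exists dl; split; auto.
  - apply borel_compl; auto.
  - exact (borel_union _ _ (fun n x => A n (T x)) IH).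
Qed.

Lemma borel_preimage_iter (T : X -> X) :
  continuous_map d T -> forall n A, borel d A -> borel d (fun x => A (Nat.iter n T x)).
Proof.
  intros hc n; induction n as [|n IH]; intros A hA; simpl; auto.
  apply (IH (fun y => A (T y))), borel_preimage; auto.
Qed.

End Borel.

Section Measure.
Variables (X : Type) (d : X -> X -> R) (mu : (X -> Prop) -> R).
Hypothesis hmu : borel_prob_measure d mu.

(* The partial sums (n+1) mu(empty) of the empty sequence converge to mu(empty). *)
Lemma measure_empty : mu (fun _ => False) = 0.
Proof.
  destruct hmu as [hext [_ [_ hadd]]].
  pose proof (hadd (fun _ _ => False) (fun _ => borel_False X d) (fun n m x _ h _ => h)) as hs.
  cbv beta in hs.
  rewrite (hext (fun x => exists n : nat, False) (fun _ => False)) in hs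
    by (intros x; split; [intros [_ f]; exact f | tauto]).
  set (c := mu (fun _ => False)) in *.
  destruct (Req_dec c 0) as [|hc]; auto. exfalso.
  pose proof (Rabs_pos_lt c hc).
  destruct (hs (Rabs c / 2)) as [N HN]; [lra|].
  specialize (HN (S N) ltac:(lia)). unfold R_dist in HN.
  rewrite sum_cte, !S_INR in HN.
  replace (c * (INR N + 1 + 1) - c) with ((INR N + 1) * c) in HN by ring.
  rewrite Rabs_mult, (Rabs_right (INR N + 1)) in HN by (pose proof (pos_INR N); lra).
  pose proof (pos_INR N). nra.
Qed.

(* Finite additivity, as countable additivity for A, B, empty, empty, ... *)
Lemma measure_disjoint_union P Q : borel d P -> borel d Q -> (forall x, P x -> Q x -> False) ->
  mu (fun x => P x \/ Q x) = mu P + mu Q.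
Proof.
  intros hP hQ hPQ. pose proof measure_empty as h0.
  destruct hmu as [hext [_ [_ hadd]]].
  set (A := fun n : nat => match n with 0%nat => P | 1%nat => Q | _ => fun _ => False end).
  assert (hb : forall n, borel d (A n)) by (intros [|[|n]]; simpl; auto; apply borel_False).
  assert (hdis : forall n m x, n <> m -> A n x -> A m x -> False)
    by (intros [|[|n]] [|[|m]] x hnm; simpl; try tauto; eauto; lia).
  pose proof (hadd A hb hdis) as hs.
  rewrite (hext (fun x => exists n, A n x) (fun x => P x \/ Q x)) in hs.
  2:{ intros x; split; [intros [[|[|n]] hn]; simpl in hn; tauto|].
      intros [h|h]; [exists 0%nat | exists 1%nat]; exact h. }
  apply (uniqueness_sum _ _ _ hs), (infinite_sum_eventually _ _ 1%nat).
  intros n hn. induction n as [|n IH]; [lia|].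
  destruct n as [|n]; [reflexivity|]. rewrite tech5, IH by lia. simpl; rewrite h0; ring.
Qed.

Lemma measure_split P Q : borel d P -> borel d Q ->
  mu P = mu (fun x => P x /\ Q x) + mu (fun x => P x /\ ~ Q x).
Proof.
  intros hP hQ. pose proof hmu as [hext _].
  rewrite <- measure_disjoint_union by (try apply borel_inter; try apply borel_compl; auto; tauto).
  apply hext; intros x; destruct (classic (Q x)); tauto.
Qed.

Lemma measure_mono D A : borel d D -> borel d A -> (forall x, D x -> A x) -> mu D <= mu A.
Proof.
  intros hD hA hsub. pose proof hmu as [hext [hnn _]].
  rewrite (measure_split A D hA hD).
  rewrite (hext (fun x => A x /\ D x) D) by (intros x; split; [tauto | auto]).
  pose proof (hnn (fun x => A x /\ ~ D x) ltac:(apply borel_inter; auto; apply borel_compl; auto)).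
  lra.
Qed.

(* Continuity from below for null sets: an increasing union of null Borel
   sets is null (disjointify into the shells A (k+1) \ A k). *)
Lemma measure_increasing_null_union (A : nat -> X -> Prop) :
  (forall k, borel d (A k)) -> (forall n m x, (n <= m)%nat -> A n x -> A m x) ->
  (forall k, mu (A k) = 0) -> mu (fun x => exists k, A k x) = 0.
Proof.
  intros hA hmono hnull. pose proof hmu as [hext [hnn [_ hadd]]].
  set (D := fun k : nat => match k with
                           | 0%nat => A 0%nat
                           | S j => fun z => A (S j) z /\ ~ A j z end).
  assert (hD : forall k, borel d (D k))
    by (intros [|k]; simpl; auto; apply borel_inter; auto; apply borel_compl; auto).
  assert (hDA : forall k z, D k z -> A k z) by (intros [|k] z; simpl; tauto).
  assert (hdis : forall n m x, n <> m -> D n x -> D m x -> False).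
  { assert (lt : forall n m x, (n < m)%nat -> D n x -> D m x -> False).
    { intros n [|m] x hnm dn dm; [lia|]. apply (proj2 dm), (hmono n m x); [lia | auto]. }
    intros n m x hnm dn dm. destruct (Nat.lt_total n m) as [h|[h|h]]; [eauto | tauto | eauto]. }
  assert (hD0 : forall k, mu (D k) = 0).
  { intros k. pose proof (measure_mono _ _ (hD k) (hA k) (hDA k)) as h.
    rewrite hnull in h. pose proof (hnn _ (hD k)); lra. }
  rewrite (hext _ (fun x => exists k, D k x)).
  - pose proof (infinite_sum_single (fun n => mu (D n)) 0 (fun n _ => hD0 n)) as hs0.
    cbv beta in hs0; rewrite hD0 in hs0.
    exact (uniqueness_sum _ _ _ (hadd D hD hdis) hs0).
  - intros x; split; [|intros [k hk]; exists k; apply hDA, hk].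
    intros [k hk]. induction k as [|k IH]; [exists 0%nat; exact hk|].
    destruct (classic (A k x)) as [h|h]; [apply IH, h | exists (S k); simpl; auto].
Qed.

End Measure.

Fixpoint sum_below (f : nat -> R) (L : nat) : R :=
  match L with O => 0 | S L' => sum_below f L' + f L' end.

Lemma sum_below_ext f g L : (forall n, (n < L)%nat -> f n = g n) -> sum_below f L = sum_below g L.
Proof.
  induction L as [|L IH]; intros H; simpl; auto.
  rewrite IH, H; [reflexivity | lia | intros n hn; apply H; lia].
Qed.

Lemma sum_below_plus f g L : sum_below (fun n => f n + g n) L = sum_below f L + sum_below g L.
Proof. induction L as [|L IH]; simpl; [lra | rewrite IH; lra]. Qed.

Lemma sum_below_const c L : sum_below (fun _ => c) L = INR L * c.
Proof. induction L as [|L IH]; simpl sum_below; [simpl; lra | rewrite IH, S_INR; lra]. Qed.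

(* Induction on
   L, splitting S according to membership in B L. *)
Lemma measure_count {X} (d : X -> X -> R) mu : borel_prob_measure d mu ->
  forall (B : nat -> X -> Prop), (forall n, borel d (B n)) ->
  forall L S c, borel d S -> (forall z, S z -> INR (count_in (fun n => B n z) 0 L) <= c) ->
  sum_below (fun n => mu (fun x => B n x /\ S x)) L <= c * mu S.
Proof.
  intros hmu B hB L. pose proof (measure_empty X d mu hmu) as h0.
  pose proof hmu as [hext [hnn _]].
  induction L as [|L IH]; intros S c hS Hc; simpl sum_below.
  - destruct (classic (exists z, S z)) as [[z hz]|nz].
    + specialize (Hc z hz); simpl count_in in Hc; rewrite INR_0 in Hc.
      pose proof (hnn S hS). apply Rmult_le_pos; lra.
    + rewrite (hext S (fun _ => False)) by (intros x; split; [intros h; apply nz; eauto | tauto]).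
      rewrite h0; lra.
  - set (S1 := fun z => S z /\ B L z). set (S2 := fun z => S z /\ ~ B L z).
    assert (hS1 : borel d S1) by (apply borel_inter; auto).
    assert (hS2 : borel d S2) by (apply borel_inter; auto; apply borel_compl; auto).
    assert (I1 : sum_below (fun n => mu (fun x => B n x /\ S1 x)) L <= (c - 1) * mu S1).
    { apply IH; auto. intros z [hz hb]. specialize (Hc z hz). simpl count_in in Hc.
      rewrite plus_INR in Hc. unfold indic in Hc. simpl Nat.add in Hc.
      destruct excluded_middle_informative as [_|n]; [simpl INR in Hc; lra | tauto]. }
    assert (I2 : sum_below (fun n => mu (fun x => B n x /\ S2 x)) L <= c * mu S2).
    { apply IH; auto. intros z [hz hb]. specialize (Hc z hz). simpl count_in in Hc.
      rewrite plus_INR in Hc. pose proof (pos_INR (indic (fun n => B n z) L)). lra. }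
    rewrite (sum_below_ext _ (fun n => mu (fun x => B n x /\ S1 x) + mu (fun x => B n x /\ S2 x))).
    2:{ intros n _. rewrite (measure_split X d mu hmu (fun x => B n x /\ S x) (B L))
          by (auto; apply borel_inter; auto).
        f_equal; apply hext; intros x; unfold S1, S2; tauto. }
    rewrite sum_below_plus, (measure_split X d mu hmu S (B L) hS (hB L)). fold S1 S2.
    rewrite (hext (fun x => B L x /\ S x) S1) by (intros x; unfold S1; tauto).
    lra.
Qed.

Lemma invariant_measure_iter {X} (d : X -> X -> R) (T : X -> X) mu :
  continuous_map d T -> invariant_measure d T mu ->
  forall n A, borel d A -> mu (fun x => A (Nat.iter n T x)) = mu A.
Proof.
  intros hc [hmu hinv] n; induction n as [|n IH]; intros A hA; simpl; [reflexivity|].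
  rewrite (IH (fun y => A (T y))) by (apply borel_preimage; auto). apply hinv; auto.
Qed.

(** Invariant measures concentrate on a fixed point to which all orbits are
    Banach proximal *)

Section Concentration.
Variables (X : Type) (d : X -> X -> R) (T : X -> X) (x0 : X).
Hypotheses (hm : is_metric d) (hk : compact_space d) (hc : continuous_map d T).
Hypotheses (hfix : T x0 = x0) (hbp : forall x y, banach_proximal d T x y).
Variables (eps lam : R).
Hypotheses (he : eps > 0) (hl : lam < 1).

Definition time_outside (z : X) (L : nat) : nat :=
  count_in (fun n => ~ d (Nat.iter n T z) x0 < eps) 0 L.

Definition good_window (z : X) (L : nat) : Prop :=
  (1 <= L)%nat /\ INR (time_outside z L) <= (1 - lam) * INR L.

(* Banach proximality of (z, x0) gives a good window for z, and continuity
   of the first N iterates makes it good for all points near z as well. *)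
Lemma good_window_near z : exists N dl, dl > 0 /\ forall w, d z w < dl -> good_window w N.
Proof.
  pose proof (metric_pseudometric d hm) as [_ [qs [qt _]]].
  destruct (hbp z x0 (eps / 2) ltac:(lra) lam hl) as [N [hN HN]].
  specialize (HN 0%nat N (le_n _)).
  destruct (continuous_iter_window X d T hc N z (eps / 2) ltac:(lra)) as [dl [hdl Hd]].
  exists N, dl; split; auto. intros w hw; split; auto. unfold time_outside.
  pose proof (count_compl (fun n => d (Nat.iter n T w) x0 < eps) 0 N) as hcc.
  assert (hmono : (count_in (fun n => (d (Nat.iter n T z) (Nat.iter n T x0) < eps / 2)%R) 0 N <=
                   count_in (fun n => (d (Nat.iter n T w) x0 < eps)%R) 0 N)%nat).
  { apply count_mono. intros j hj Fj. simpl in *. rewrite (iter_fixed T x0 j hfix) in Fj.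
    specialize (Hd w hw j hj). pose proof (qt (Nat.iter j T w) (Nat.iter j T z) x0).
    rewrite qs in Hd. lra. }
  apply le_INR in hmono. apply (f_equal INR) in hcc. rewrite plus_INR in hcc. lra.
Qed.

(* By compactness the length of the first good window is bounded uniformly. *)
Lemma uniform_good_window : exists M, forall z, exists l, (l <= M)%nat /\ good_window z l.
Proof.
  pose proof (metric_pseudometric d hm) as [_ [_ [qt qr]]].
  set (U := fun (N : nat) z => exists dl, dl > 0 /\
              forall w, d z w < dl -> exists l, (l <= N)%nat /\ good_window w l).
  destruct (compact_increasing_cover d U hk) as [M HM].
  - intros N z [dl [hdl H]]. exists (dl / 2); split; [lra|]. intros y hy.
    exists (dl / 2); split; [lra|]. intros w hw. apply H. pose proof (qt z y w); lra.
  - intros N M' z hNM [dl [hdl H]]. exists dl; split; auto.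
    intros w hw; destruct (H w hw) as [l [hlN hgood]]; exists l; split; [lia | auto].
  - intros z. destruct (good_window_near z) as [N [dl [hdl H]]].
    exists N, dl; split; auto. intros w hw; exists N; split; auto.
  - exists M; intros z. destruct (HM z) as [dl [hdl H]]. apply H. rewrite qr; lra.
Qed.

(* Chaining good windows: over any K steps an orbit spends at most
   (1-lam) K + M steps outside B(x0, eps). *)
Lemma time_outside_bound M :
  (forall z, exists l, (l <= M)%nat /\ good_window z l) ->
  forall K z, INR (time_outside z K) <= (1 - lam) * INR K + INR M.
Proof.
  intros H K. induction K as [K IH] using lt_wf_ind. intros z.
  destruct (le_lt_dec K M) as [hle|hgt].
  - pose proof (count_le (fun n => ~ d (Nat.iter n T z) x0 < eps) 0 K) as h.
    apply le_INR in h, hle. pose proof (pos_INR K). unfold time_outside. nra.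
  - destruct (H z) as [l [hlM [hl1 hgood]]].
    replace K with (l + (K - l))%nat by lia. unfold time_outside. rewrite count_split.
    rewrite (count_ext _ (fun n => ~ d (Nat.iter n T (Nat.iter l T z)) x0 < eps) (0 + l)%nat 0%nat).
    2:{ intros j hj. rewrite !Nat.add_0_l, iter_add. tauto. }
    specialize (IH (K - l)%nat ltac:(lia) (Nat.iter l T z)). unfold time_outside in IH, hgood.
    rewrite !plus_INR. lra.
Qed.

(* Summing the invariant measures of T^-n (X \ B(x0,eps)) over n < K and
   comparing with the visit count gives K mu(X \ B) <= (1-lam) K + M. *)
Lemma invariant_measure_outside_bound mu : invariant_measure d T mu ->
  mu (fun z => ~ d z x0 < eps) <= 1 - lam.
Proof.
  intros hinv. pose proof hinv as [hmu _]. pose proof hmu as [hext [_ [htot _]]].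
  set (A := fun z => ~ d z x0 < eps).
  assert (hA : borel d A)
    by (apply borel_compl, borel_open, ball_open_sym, metric_pseudometric, hm).
  destruct uniform_good_window as [M HM].
  apply (le_of_linear_bound _ _ (INR M)). intros K.
  pose proof (measure_count d mu hmu (fun n x => A (Nat.iter n T x))
                (fun n => borel_preimage_iter X d T hc n A hA) K (fun _ => True)
                ((1 - lam) * INR K + INR M) (borel_True X d)
                (fun z _ => time_outside_bound M HM K z)) as h.
  rewrite htot, Rmult_1_r in h.
  rewrite (sum_below_ext _ (fun _ => mu A)), sum_below_const in h; [lra|].
  intros n _. rewrite (hext _ (fun x => A (Nat.iter n T x))) by tauto.
  apply (invariant_measure_iter d T mu hc hinv n A hA).
Qed.

End Concentration.

Section Support.
Variables (X : Type) (d : X -> X -> R) (T : X -> X) (x0 : X).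
Hypotheses (hm : is_metric d) (hk : compact_space d) (hc : continuous_map d T).
Hypotheses (hfix : T x0 = x0) (hbp : forall x y, banach_proximal d T x y).

(* Letting lambda tend to 1: invariant measures give no mass outside any
   ball around x0. *)
Lemma invariant_measure_outside_null mu eps : invariant_measure d T mu -> eps > 0 ->
  mu (fun z => ~ d z x0 < eps) = 0.
Proof.
  intros hinv he. pose proof hinv as [[_ [hnn _]] _].
  apply nonneg_below_inv_succ.
  - apply hnn, borel_compl, borel_open, ball_open_sym, metric_pseudometric, hm.
  - intros k. pose proof (invariant_measure_outside_bound X d T x0 hm hk hc hfix hbp eps
                            (1 - / (INR k + 1)) he ltac:(pose proof (inv_succ_pos k); lra) mu hinv).
    lra.
Qed.

Lemma singleton_closed : is_closed d (fun x => x = x0).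
Proof.
  intros x hx. pose proof (metric_pseudometric d hm) as [q0 _].
  exists (d x x0); split.
  - destruct (Rle_lt_or_eq_dec 0 _ (q0 x x0)) as [h|h]; [lra|]. exfalso; apply hx, hm; auto.
  - intros y hy ->. lra.
Qed.

(* X \ {x0} is the increasing union of the null sets X \ B(x0, 1/(k+1)). *)
Lemma invariant_measure_concentrated mu : invariant_measure d T mu -> mu (fun x => x = x0) = 1.
Proof.
  intros hinv. pose proof hinv as [hmu _]. pose proof hmu as [hext [_ [htot _]]].
  pose proof (metric_pseudometric d hm) as [q0 [_ [_ qr]]].
  set (A := fun (k : nat) z => ~ d z x0 < / (INR k + 1)).
  assert (hnull : mu (fun x => exists k, A k x) = 0).
  { apply (measure_increasing_null_union X d mu hmu A).
    - intros k; apply borel_compl, borel_open, ball_open_sym, metric_pseudometric, hm.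
    - intros n m z h an am. apply an. pose proof (inv_succ_antitone n m h). lra.
    - intros k; apply invariant_measure_outside_null; auto; apply inv_succ_pos. }
  rewrite (hext _ (fun x => ~ x = x0)) in hnull.
  2:{ intros x; split.
      - intros [k hk'] ->. apply hk'. rewrite qr. apply inv_succ_pos.
      - intros hne. assert (hpos : d x x0 > 0).
        { destruct (Rle_lt_or_eq_dec 0 _ (q0 x x0)) as [h|h]; [lra|]. exfalso; apply hne, hm; auto. }
        destruct (inv_succ_small _ hpos) as [k hk']. exists k; unfold A; lra. }
  assert (hb : borel d (fun x => x = x0)).
  { apply (borel_ext X d (fun x => ~ ~ x = x0)); [intros; tauto|].
    apply borel_compl, borel_open, singleton_closed. }
  pose proof (measure_split X d mu hmu (fun _ => True) (fun x => x = x0) (borel_True X d) hb) as h.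
  rewrite htot, (hext (fun x => True /\ x = x0) (fun x => x = x0)),
    (hext (fun x => True /\ ~ x = x0) (fun x => ~ x = x0)) in h by tauto.
  lra.
Qed.

End Support.

Definition dirac {X} (x0 : X) (A : X -> Prop) : R :=
  if excluded_middle_informative (A x0) then 1 else 0.

(* At most one of countably many disjoint sets contains x0, so the Dirac
   series has at most one nonzero term. *)
Lemma dirac_invariant {X} (d : X -> X -> R) (T : X -> X) x0 :
  T x0 = x0 -> invariant_measure d T (dirac x0).
Proof.
  intros hfix. split; [repeat split|].
  - intros A B H; unfold dirac.
    destruct (excluded_middle_informative (A x0)), (excluded_middle_informative (B x0));
      firstorder.
  - intros A _; unfold dirac; destruct excluded_middle_informative; lra.
  - unfold dirac; destruct excluded_middle_informative; tauto.
  - intros A _ hdis.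
    destruct (classic (exists k, A k x0)) as [[k hk]|nk].
    + replace (dirac x0 (fun x => exists n, A n x)) with (dirac x0 (A k)).
      * apply (infinite_sum_single (fun n => dirac x0 (A n)) k); intros n hn. unfold dirac.
        destruct excluded_middle_informative as [h|h]; [exfalso; eauto | reflexivity].
      * unfold dirac; do 2 destruct excluded_middle_informative; firstorder lra.
    + replace (dirac x0 (fun x => exists n, A n x)) with (dirac x0 (A 0%nat)).
      * apply (infinite_sum_single (fun n => dirac x0 (A n)) 0); intros n _. unfold dirac.
        destruct excluded_middle_informative; [exfalso; eauto | reflexivity].
      * unfold dirac; do 2 destruct excluded_middle_informative; firstorder lra.
  - intros A _; unfold dirac; rewrite hfix; reflexivity.
Qed.

(* If every invariant measure is carried by {x0}, then {x0} is the support: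
   any closed set of full invariant measure has full Dirac mass, so contains x0. *)
Lemma supp_singleton_of_concentrated {X} (d : X -> X -> R) (T : X -> X) x0 :
  is_metric d -> T x0 = x0 ->
  (forall mu, invariant_measure d T mu -> mu (fun x => x = x0) = 1) ->
  supp_is_singleton_at d T x0.
Proof.
  intros hm hfix hconc. split; [split|]; auto.
  - apply singleton_closed; auto.
  - intros C _ Hall. specialize (Hall (dirac x0) (dirac_invariant d T x0 hfix)).
    unfold dirac in Hall; destruct excluded_middle_informative; auto. lra.
Qed.

Theorem mainTheorem10 (X : Type) (d : X -> X -> R) (T : X -> X) :
  TDS d T -> weakly_mixing d T ->
  ((forall x y : X, banach_proximal d T x y) /\ supp_singleton d T)
  \/
  (first_category (dprod d) (fun p : X * X => banach_proximal d T (fst p) (snd p)) /\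
   (forall p : X * X, banach_proximal d T (fst p) (snd p) ->
      ~ transitive_point (dprod d) (TT T) p)).
Proof.
  intros [hX [hm [hk hc]]] hw.
  destruct (classic (exists p : X * X, banach_proximal d T (fst p) (snd p) /\
                                       transitive_point (dprod d) (TT T) p))
    as [[[x y] [hbp htr]]|nex].
  - left.
    assert (hall : forall u v, banach_proximal d T u v)
      by exact (banach_proximal_transfer X d T hm hc x y hbp htr).
    split; [exact hall|].
    destruct (fixed_point_of_all_proximal X d T hm hc hX hk hall) as [x0 hfix].
    exists x0. apply supp_singleton_of_concentrated; auto.
    intros mu hinv; exact (invariant_measure_concentrated X d T x0 hm hk hc hfix hall mu hinv).
  - right.
    assert (hnt : forall p, banach_proximal d T (fst p) (snd p) ->
                            ~ transitive_point (dprod d) (TT T) p)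
      by (intros p h1 h2; apply nex; eauto).
    split; [|exact hnt].
    destruct (nontransitive_first_category X d T hm hc hX hk hw) as [B [HB Hcov]].
    exists B; split; auto.
Qed.
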